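(* Let $T\in TP(d)$ be a biplanar extremal thermal process and let $(\lambda,\mu)$ be a pair of orderings for which the drawing of $G(T)$ is plain (orders $\pi_{in}(T)=\lambda$, $\pi_{out}(T)=\mu$). Let $p$ be a state of which $\lambda$ is a $\beta$-order. Then $r=Tp$ is an extreme point of $p^{TP}=\{Sp:S\in TP(d)\}$ and $\mu$ is a $\beta$-order of $r$. If moreover the ratios $p_i/g_i$ are pairwise distinct, then $T$ is the only element of $TP(d)$ mapping $p$ to $r$.
   Context: Fix $d\ge 2$, $\beta\in(0,\infty)$ and pairwise distinct reals $E_0=0,E_1,\dots,E_{d-1}$. Put $q_{m,n}=e^{-\beta(E_m-E_n)}$, $Z=\sum_j q_{j,0}$, $g_i=q_{i,0}/Z$. A state is a probability vector in $\mathbb{R}^d$. $TP(d)$ is the set of $d\times d$ real matrices with non-negative entries, columns summing to $1$, and $Tg=g$; an extremal thermal process is an extreme point of $TP(d)$. A $\beta$-order of a state $p$ is a tuple $(\pi(0),\dots,\pi(d-1))$ for a permutation $\pi$ of $\{0,\dots,d-1\}$ with $p_{\pi(0)}/g_{\pi(0)}\ge\dots\ge p_{\pi(d-1)}/g_{\pi(d-1)}$. For $T\in TP(d)$, $G(T)$ is the bipartite graph with left vertices $L_0,\dots,L_{d-1}$ (columns), right vertices $R_0,\dots,R_{d-1}$ (rows), and an edge $\{L_j,R_i\}$ iff $T_{ij}>0$. Given orderings $\lambda=(\lambda_0,\dots,\lambda_{d-1})$, $\mu=(\mu_0,\dots,\mu_{d-1})$ (permutations of $\{0,\dots,d-1\}$),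 place $L_{\lambda_a}$ at height $a$ on one vertical line and $R_{\mu_b}$ at height $b$ on a parallel line, edges drawn straight; the drawing is plain if there are no two edges $\{L_{\lambda_a},R_{\mu_b}\}$, $\{L_{\lambda_{a'}},R_{\mu_{b'}}\}$ with $a<a'$ and $b>b'$. An extremal thermal process is biplanar if some pair $(\lambda,\mu)$ gives a plain drawing. *)

From HB Require Import structures.
From mathcomp Require Import all_boot all_order all_algebra all_fingroup.
From mathcomp Require Import all_classical all_reals.
From mathcomp Require Import sequences exp.
Set Implicit Arguments. Unset Strict Implicit. Unset Printing Implicit Defensive.
Import Order.TTheory GRing.Theory Num.Theory.
Local Open Scope ring_scope.

Section Thermal.
Variables (R : realType) (d : nat).

Definition idx0 (hd : (1 < d)%N) : 'I_d := Ordinal (ltnW hd).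

Definition qfac (beta : R) (E : 'I_d -> R) (m n : 'I_d) : R :=
  expR (- (beta * (E m - E n))).

Definition Zpart (beta : R) (E : 'I_d -> R) (z : 'I_d) : R :=
  \sum_(j < d) qfac beta E j z.

Definition gibbs (beta : R) (E : 'I_d -> R) (z : 'I_d) : 'cV[R]_d :=
  \col_i (qfac beta E i z / Zpart beta E z).

Definition is_state (p : 'cV[R]_d) : Prop :=
  (forall i, 0 <= p i 0) /\ \sum_(i < d) p i 0 = 1.

Definition TP (g : 'cV[R]_d) (T : 'M[R]_d) : Prop :=
  (forall i j, 0 <= T i j) /\
  (forall j, \sum_(i < d) T i j = 1) /\
  T *m g = g.

Definition extreme_point (V : lmodType R) (S : V -> Prop) (x : V) : Prop :=
  S x /\
  forall y z t, S y -> S z -> 0 < t -> t < 1 ->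
    x = t *: y + (1 - t) *: z -> y = z.

Definition extremal_TP (g : 'cV[R]_d) (T : 'M[R]_d) : Prop :=
  extreme_point (TP g) T.

Definition beta_order (g p : 'cV[R]_d) (lam : {perm 'I_d}) : Prop :=
  forall a b : 'I_d, (a < b)%N ->
    p (lam b) 0 / g (lam b) 0 <= p (lam a) 0 / g (lam a) 0.

(* edge {L_j, R_i} of G(T) iff T_{ij} > 0 *)
Definition edgeG (T : 'M[R]_d) (j i : 'I_d) : Prop := 0 < T i j.

Definition plain (T : 'M[R]_d) (lam mu : {perm 'I_d}) : Prop :=
  ~ exists a a' b b' : 'I_d,
      [/\ (a < a')%N, (b' < b)%N, edgeG T (lam a) (mu b) & edgeG T (lam a') (mu b')].

Definition biplanar (g : 'cV[R]_d) (T : 'M[R]_d) : Prop :=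
  extremal_TP g T /\ exists lam mu, plain T lam mu.

Definition orbitTP (g p : 'cV[R]_d) (r : 'cV[R]_d) : Prop :=
  exists S, TP g S /\ r = S *m p.

End Thermal.

(* Order the rows by mu and let x_j = p_j / g_j.  For every k, the g-weighted
   mass that a thermal process S sends from column j into the first k rows,
   w_j, satisfies 0 <= w_j <= g_j and sum_j w_j = g_(first k rows), and the
   mass of S p in the first k rows is sum_j w_j x_j.  Plainness together with
   the beta-order lambda of p says that T fills these rows greedily, from the
   columns of largest x_j down to a threshold, which maximises that linear
   functional (uniquely when the x_j are distinct).  So every S p is dominated
   by T p in all mu-prefix sums; prefix sums determine a vector, whence
   extremality and uniqueness, while the threshold also separates the rows
   of T p, giving the beta-order mu. *)
From HB Require Import structures.
From mathcomp Require Import all_boot all_order all_algebra all_fingroup.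
From mathcomp Require Import all_classical all_reals.
From mathcomp Require Import exp.
From mathcomp Require Import lra.
Set Implicit Arguments. Unset Strict Implicit. Unset Printing Implicit Defensive.
Import Order.TTheory GRing.Theory Num.Theory.
Local Open Scope ring_scope.

Lemma exists_separating_threshold (R : realFieldType) (I : finType)
    (P Q : pred I) (f : I -> R) :
  (forall i i', P i -> Q i' -> f i' <= f i) ->
  exists c, (forall i, P i -> c <= f i) /\ (forall i, Q i -> f i <= c).
Proof.
move=> PgeQ; have [i0 Pi0|noP] := pickP P.
  have [im Pim im_min] := arg_minP f Pi0.
  by exists (f im); split=> // i Qi; apply: PgeQ.
exists (\sum_i `|f i|); split=> [i|i _]; first by rewrite noP.
by rewrite (bigD1 i) //= (le_trans (ler_norm _)) // lerDl sumr_ge0.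
Qed.

Lemma lb_mul_sum_le_wsum (R : realFieldType) (I : finType) (a y : I -> R) c :
  (forall i, 0 <= a i) -> (forall i, 0 < a i -> c <= y i) ->
  c * \sum_i a i <= \sum_i a i * y i.
Proof.
move=> a_ge0 y_ge; rewrite mulr_sumr; apply: ler_sum => i _.
have [a0|a_neq0] := eqVneq (a i) 0; first by rewrite a0 mulr0 mul0r.
by rewrite mulrC ler_wpM2l // y_ge // lt_def a_neq0 a_ge0.
Qed.

Lemma wsum_le_ub_mul_sum (R : realFieldType) (I : finType) (a y : I -> R) c :
  (forall i, 0 <= a i) -> (forall i, 0 < a i -> y i <= c) ->
  \sum_i a i * y i <= c * \sum_i a i.
Proof.
move=> a_ge0 y_le; rewrite mulr_sumr; apply: ler_sum => i _.
have [a0|a_neq0] := eqVneq (a i) 0; first by rewrite a0 mulr0 mul0r.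
by rewrite [leRHS]mulrC ler_wpM2l // y_le // lt_def a_neq0 a_ge0.
Qed.

(* Fractional knapsack: filling the capacities greedily in decreasing order
   of [x] is optimal. *)
Section ThresholdFilling.
Variables (R : realFieldType) (J : finType) (cap w x : J -> R) (c : R).
Hypotheses (x_ge : forall j, 0 < w j -> c <= x j)
           (x_le : forall j, w j < cap j -> x j <= c).
Variable w' : J -> R.
Hypotheses (w'_ge0 : forall j, 0 <= w' j) (w'_le : forall j, w' j <= cap j)
           (sum_w' : \sum_j w' j = \sum_j w j).

Let gap j := (w j - w' j) * (x j - c).

Let gap_ge0 j : 0 <= gap j.
Proof.
rewrite /gap; have [lt_w|lt_w'|->] := ltgtP (w j) (w' j).
- rewrite nmulr_rge0 ?subr_lt0 // subr_le0; apply: x_le.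
  exact: lt_le_trans lt_w (w'_le j).
- rewrite pmulr_rge0 ?subr_gt0 // subr_ge0; apply: x_ge.
  exact: le_lt_trans (w'_ge0 j) lt_w'.
- by rewrite subrr mul0r.
Qed.

Let sum_gap : \sum_j gap j = \sum_j w j * x j - \sum_j w' j * x j.
Proof.
rewrite /gap; under eq_bigr do rewrite mulrBr.
rewrite sumrB -big_distrl /= sumrB sum_w' subrr mul0r subr0 -sumrB.
by apply: eq_bigr => j _; rewrite mulrBl.
Qed.

Lemma threshold_filling_max : \sum_j w' j * x j <= \sum_j w j * x j.
Proof. by rewrite -subr_ge0 -sum_gap sumr_ge0. Qed.

Lemma threshold_filling_unique :
  injective x -> \sum_j w' j * x j = \sum_j w j * x j -> w' =1 w.
Proof.
move=> x_inj eq_sum.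
have sum_gap0 : \sum_j gap j = 0 by rewrite sum_gap eq_sum subrr.
have {sum_gap0} gap0 j : w j != w' j -> x j = c.
  move=> neq_w.
  move/eqP: (psumr_eq0P (fun j _ => gap_ge0 j) sum_gap0 (i := j) isT).
  by rewrite mulf_eq0 subr_eq0 (negbTE neq_w) subr_eq0 => /eqP.
move=> j; apply/eqP; rewrite eq_sym; apply/negPn/negP => neq_w.
have only_j j' : j' != j -> w j' - w' j' = 0.
  move=> neq_j; apply/eqP; rewrite subr_eq0; apply: contraR neq_j => neq_w'.
  by apply/eqP/x_inj; rewrite !gap0.
move/eqP: sum_w'; rewrite eq_sym -subr_eq0 -sumrB (bigD1 j) //= big1 ?addr0 //.
by rewrite subr_eq0 (negbTE neq_w).
Qed.

End ThresholdFilling.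

Definition perm_prefix d (mu : {perm 'I_d}) (k : nat) : pred 'I_d :=
  fun i => ((mu^-1)%g i < k)%N.

Lemma big_perm_prefixS (V : nmodType) d (mu : {perm 'I_d}) (k : 'I_d)
    (F : 'I_d -> V) :
  \sum_(i | perm_prefix mu k.+1 i) F i =
    F (mu k) + \sum_(i | perm_prefix mu k i) F i.
Proof.
rewrite (bigD1 (mu k)) /perm_prefix ?permK //=; congr (_ + _).
apply: eq_bigl => i; rewrite ltnS leq_eqVlt -(inj_eq (@perm_inj _ mu^-1)) permK.
by rewrite -val_eqE; case: ltngtP.
Qed.

Lemma perm_prefix_sums_inj (V : zmodType) d (mu : {perm 'I_d}) (F G : 'I_d -> V) :
  (forall k, \sum_(i | perm_prefix mu k i) F i =
             \sum_(i | perm_prefix mu k i) G i) ->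
  F =1 G.
Proof.
move=> eq_sums i; have := eq_sums ((mu^-1)%g i).+1.
by rewrite !big_perm_prefixS permKV eq_sums => /addIr.
Qed.

Section PlainDrawing.
Variables (R : realType) (d : nat) (g p : 'cV[R]_d) (T : 'M[R]_d).
Variables (lam mu : {perm 'I_d}).
Hypotheses (g_gt0 : forall i, 0 < g i 0) (TP_T : TP g T).

Let ratio j := p j 0 / g j 0.

Let inflow (S : 'M[R]_d) k j := \sum_(i | perm_prefix mu k i) S i j * g j 0.

Let g_mul_ratio j : g j 0 * ratio j = p j 0.
Proof. by rewrite mulrCA mulfV ?mulr1 ?gt_eqF. Qed.

Let mulmx_ratio (S : 'M[R]_d) i : (S *m p) i 0 = \sum_j S i j * g j 0 * ratio j.
Proof. by rewrite mxE; apply: eq_bigr => j _; rewrite -mulrA g_mul_ratio. Qed.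

Let prefix_sum_mulmx (S : 'M[R]_d) k :
  \sum_(i | perm_prefix mu k i) (S *m p) i 0 = \sum_j inflow S k j * ratio j.
Proof.
under [RHS]eq_bigr do rewrite big_distrl /=.
by rewrite exchange_big; apply: eq_bigr => i _; rewrite mulmx_ratio.
Qed.

Let weighted_entry_ge0 (S : 'M[R]_d) : TP g S -> forall i j, 0 <= S i j * g j 0.
Proof. by case=> S_ge0 _ i j; rewrite mulr_ge0 ?S_ge0 ?ltW. Qed.

Let inflow_ge0 (S : 'M[R]_d) : TP g S -> forall k j, 0 <= inflow S k j.
Proof. by move=> TP_S k j; rewrite sumr_ge0 // => i _; apply: weighted_entry_ge0. Qed.

Let inflow_add_outflow (S : 'M[R]_d) : TP g S -> forall k j,
  inflow S k j + \sum_(i | ~~ perm_prefix mu k i) S i j * g j 0 = g j 0.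
Proof.
case=> _ [S_col _] k j.
by rewrite -[RHS]mul1r -(S_col j) big_distrl [RHS](bigID (perm_prefix mu k)).
Qed.

Let inflow_le (S : 'M[R]_d) : TP g S -> forall k j, inflow S k j <= g j 0.
Proof.
move=> TP_S k j; rewrite -(inflow_add_outflow TP_S k j) lerDl sumr_ge0 // => i _.
exact: weighted_entry_ge0.
Qed.

Let sum_inflow (S : 'M[R]_d) : TP g S -> forall k,
  \sum_j inflow S k j = \sum_(i | perm_prefix mu k i) g i 0.
Proof.
case=> _ [_ Sg] k; rewrite exchange_big /=; apply: eq_bigr => i _.
by rewrite -[in RHS]Sg mxE.
Qed.

Let T_row_sum i : \sum_j T i j * g j 0 = g i 0.
Proof. by case: TP_T => _ [_ Tg]; rewrite -[in RHS]Tg mxE. Qed.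

Let T_row_ratio_ge i c : (forall j, 0 < T i j -> c <= ratio j) ->
  c <= (T *m p) i 0 / g i 0.
Proof.
move=> ratio_ge; rewrite ler_pdivlMr // mulmx_ratio -T_row_sum.
apply: lb_mul_sum_le_wsum (weighted_entry_ge0 TP_T i) _ => j.
by rewrite pmulr_lgt0 //; apply: ratio_ge.
Qed.

Let T_row_ratio_le i c : (forall j, 0 < T i j -> ratio j <= c) ->
  (T *m p) i 0 / g i 0 <= c.
Proof.
move=> ratio_le; rewrite ler_pdivrMr // mulmx_ratio -T_row_sum.
apply: wsum_le_ub_mul_sum (weighted_entry_ge0 TP_T i) _ => j.
by rewrite pmulr_lgt0 //; apply: ratio_le.
Qed.

Hypotheses (plain_T : plain T lam mu) (lam_order : beta_order g p lam).

(* Two edges of a plain drawing cannot cross, so their sources and targets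
   appear in the same order; the beta-order [lam] then compares ratios. *)
Let edge_ratio_antitone i i' j j' : 0 < T i j -> 0 < T i' j' ->
  ((mu^-1)%g i < (mu^-1)%g i')%N -> ratio j' <= ratio j.
Proof.
move=> Tij Ti'j' lt_i.
have [lt_j|lt_j'|/val_inj/perm_inj->//] := ltngtP ((lam^-1)%g j) ((lam^-1)%g j').
  by have := lam_order lt_j; rewrite !permKV.
case: plain_T; exists ((lam^-1)%g j'), ((lam^-1)%g j), ((mu^-1)%g i'), ((mu^-1)%g i).
by split; rewrite // /edgeG !permKV.
Qed.

Let inflow_T_threshold k : exists c,
  (forall j, 0 < inflow T k j -> c <= ratio j) /\
  (forall j, inflow T k j < g j 0 -> ratio j <= c).
Proof.
apply: exists_separating_threshold => j j' /lt0r_neq0/eqP in_j out_j'.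
have [i /andP[top_i]] := psumr_neq0P (fun i _ => weighted_entry_ge0 TP_T i j) in_j.
rewrite pmulr_lgt0 // => Tij.
have /lt0r_neq0/eqP : 0 < \sum_(i | ~~ perm_prefix mu k i) T i j' * g j' 0.
  by rewrite -(ltrD2l (inflow T k j')) inflow_add_outflow // addr0.
move=> /(psumr_neq0P (fun i _ => weighted_entry_ge0 TP_T i j'))[i' /andP[out_i']].
rewrite pmulr_lgt0 // => Ti'j'; apply: edge_ratio_antitone Tij Ti'j' _.
by rewrite (leq_trans top_i) // leqNgt.
Qed.

Let prefix_sum_mulmx_le (S : 'M[R]_d) k : TP g S ->
  \sum_(i | perm_prefix mu k i) (S *m p) i 0 <=
  \sum_(i | perm_prefix mu k i) (T *m p) i 0.
Proof.
move=> TP_S; rewrite !prefix_sum_mulmx.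
have [c [ratio_ge ratio_le]] := inflow_T_threshold k.
apply: (threshold_filling_max ratio_ge ratio_le (inflow_ge0 TP_S k)
                                  (inflow_le TP_S k)).
by rewrite !sum_inflow.
Qed.

Let mulmx_inflow_uniq (S : 'M[R]_d) k : injective ratio -> TP g S ->
  S *m p = T *m p -> inflow S k =1 inflow T k.
Proof.
move=> ratio_inj TP_S Sp_Tp; have [c [ratio_ge ratio_le]] := inflow_T_threshold k.
apply: (threshold_filling_unique ratio_ge ratio_le (inflow_ge0 TP_S k)
                                     (inflow_le TP_S k)) => //.
  by rewrite !sum_inflow.
by rewrite -!prefix_sum_mulmx Sp_Tp.
Qed.

Lemma mulmx_extreme_orbitTP : extreme_point (orbitTP g p) (T *m p).
Proof.
split; first by exists T.
move=> _ _ t [S1 [TP_S1 ->]] [S2 [TP_S2 ->]] t_gt0 t_lt1 Tp_conv.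
apply/colP; apply: (@perm_prefix_sums_inj _ _ mu
  (fun i => (S1 *m p) i 0) (fun i => (S2 *m p) i 0)) => k.
have := prefix_sum_mulmx_le k TP_S1; have := prefix_sum_mulmx_le k TP_S2.
have -> : \sum_(i | perm_prefix mu k i) (T *m p) i 0 =
    t * \sum_(i | perm_prefix mu k i) (S1 *m p) i 0 +
    (1 - t) * \sum_(i | perm_prefix mu k i) (S2 *m p) i 0.
  by rewrite Tp_conv !mulr_sumr -big_split; apply: eq_bigr => i _; rewrite !mxE.
set s1 := \sum_(i | _) _; set s2 := \sum_(i | _) _ => le2 le1; nra.
Qed.

Lemma mulmx_beta_order : beta_order g (T *m p) mu.
Proof.
move=> a b lt_ab.
have lt_mu : ((mu^-1)%g (mu a) < (mu^-1)%g (mu b))%N by rewrite !permK.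
have [c [ratio_ge ratio_le]] := @exists_separating_threshold _ _
  (fun j => 0 < T (mu a) j) (fun j => 0 < T (mu b) j) ratio
  (fun j j' Tj Tj' => edge_ratio_antitone Tj Tj' lt_mu).
exact: le_trans (T_row_ratio_le ratio_le) (T_row_ratio_ge ratio_ge).
Qed.

Lemma mulmx_orbitTP_uniq : injective (fun j => p j 0 / g j 0) ->
  forall S, TP g S -> S *m p = T *m p -> S = T.
Proof.
move=> ratio_inj S TP_S Sp_Tp; apply/matrixP => i j.
have := mulmx_inflow_uniq ((mu^-1)%g i).+1 ratio_inj TP_S Sp_Tp j.
have := mulmx_inflow_uniq ((mu^-1)%g i) ratio_inj TP_S Sp_Tp j.
rewrite /inflow !big_perm_prefixS permKV => -> /addIr.
exact/mulIf/lt0r_neq0.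
Qed.

End PlainDrawing.

Lemma gibbs_gt0 (R : realType) d (beta : R) (E : 'I_d -> R) (z i : 'I_d) :
  0 < gibbs beta E z i 0.
Proof.
rewrite mxE divr_gt0 ?expR_gt0 // /Zpart (bigD1 z) //=.
by rewrite ltr_pwDl ?expR_gt0 ?sumr_ge0 // => j _; rewrite ltW ?expR_gt0.
Qed.

Theorem mainTheorem9 (R : realType) (d : nat) (hd : (1 < d)%N) (beta : R)
  (E : 'I_d -> R) (T : 'M[R]_d) (lam mu : {perm 'I_d}) (p : 'cV[R]_d) :
  0 < beta ->
  E (idx0 hd) = 0 ->
  injective E ->
  biplanar (gibbs beta E (idx0 hd)) T ->
  plain T lam mu ->
  is_state p ->
  beta_order (gibbs beta E (idx0 hd)) p lam ->
  let g := gibbs beta E (idx0 hd) in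
  let r := T *m p in
  [/\ extreme_point (orbitTP g p) r,
      beta_order g r mu &
      ((forall i j : 'I_d, i != j -> p i 0 / g i 0 != p j 0 / g j 0) ->
       forall S : 'M[R]_d, TP g S -> S *m p = r -> S = T)].
Proof.
move=> _ _ _ [[TP_T _] _] plain_T _ lam_order g r.
have g_gt0 i : 0 < g i 0 by apply: gibbs_gt0.
split; first exact: mulmx_extreme_orbitTP g_gt0 TP_T plain_T lam_order.
  exact: mulmx_beta_order g_gt0 TP_T plain_T lam_order.
move=> ratio_neq.
apply: mulmx_orbitTP_uniq g_gt0 TP_T plain_T lam_order _ => i j /eqP.
by apply: contraTeq; apply: ratio_neq.
Qed.
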